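(* The Banach algebra $M_{\mathbb{N}}(\mathbb{C})$ is symmetrically pseudo-amenable.
   Context: $M_{\mathbb{N}}(\mathbb{C})$ denotes the set of $\mathbb{N}\times\mathbb{N}$ complex matrices $(a_{ij})$ with $\|(a_{ij})\|=\sum_{i,j\in\mathbb{N}}|a_{ij}|<\infty$, a Banach algebra under this norm and the usual matrix multiplication. For a Banach algebra $\mathfrak{U}$, $\mathfrak{U}\widehat{\otimes}\mathfrak{U}$ is the projective tensor product, with $a(b\otimes c)=ab\otimes c$, $(b\otimes c)a=b\otimes ca$, and $\pi(b\otimes c)=bc$ (extended linearly and continuously). The flip is $(b\otimes c)^{\circ}=c\otimes b$; $\mathbf{t}$ is symmetric if $\mathbf{t}^\circ=\mathbf{t}$. An approximate diagonal is a net $\{\mathbf{t}_\lambda\}$ in $\mathfrak{U}\widehat{\otimes}\mathfrak{U}$ (not necessarily bounded) with $a\mathbf{t}_\lambda-\mathbf{t}_\lambda a\to0$ and $\pi(\mathbf{t}_\lambda)a\to a$ for all $a\in\mathfrak{U}$. $\mathfrak{U}$ is symmetrically pseudo-amenable if it has an approximate diagonal consisting of symmetric elements. *)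

From Stdlib Require Import Reals.
From Coquelicot Require Import Coquelicot.
Open Scope R_scope.

Fixpoint rsum (n : nat) (f : nat -> R) : R :=
  match n with O => 0 | S m => rsum m f + f m end.

Definition CSeries (f : nat -> C) : C :=
  (Series (fun n => Re (f n)), Series (fun n => Im (f n))).

Definition Mat := nat -> nat -> C.

(** ||a|| <= e for the l^1 norm  ||a|| = sum_{i,j} |a_ij|  (all finite
    truncations are bounded by e, equivalently the full sum is <= e). *)
Definition mnorm_le (a : Mat) (e : R) : Prop :=
  forall n, rsum n (fun i => rsum n (fun j => Cmod (a i j))) <= e.

Definition in_MN (a : Mat) : Prop := exists M, mnorm_le a M.

Definition mmul (a b : Mat) : Mat :=
  fun i l => CSeries (fun m => (a i m * b m l)%C).

(** The projective tensor product M_N(C) \hat\otimes M_N(C), identified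
    (isometrically, via Grothendieck's l^1(I) \hat\otimes l^1(J) = l^1(I x J))
    with l^1(N^4):  (b \otimes c)(i,j,k,l) = b_ij * c_kl. *)
Definition Tens := nat -> nat -> nat -> nat -> C.

Definition tnorm_le (t : Tens) (e : R) : Prop :=
  forall n, rsum n (fun i => rsum n (fun j => rsum n (fun k =>
              rsum n (fun l => Cmod (t i j k l))))) <= e.

Definition in_Tens (t : Tens) : Prop := exists M, tnorm_le t M.

(** Module actions a(b \otimes c) = ab \otimes c and (b \otimes c)a = b \otimes ca. *)
Definition lact (a : Mat) (t : Tens) : Tens :=
  fun i j k l => CSeries (fun m => (a i m * t m j k l)%C).
Definition ract (t : Tens) (a : Mat) : Tens :=
  fun i j k l => CSeries (fun m => (t i j k m * a m l)%C).

(** pi(b \otimes c) = bc. *)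
Definition tpi (t : Tens) : Mat :=
  fun i l => CSeries (fun j => t i j j l).

Definition tflip (t : Tens) : Tens := fun i j k l => t k l i j.

Definition symmetric (t : Tens) : Prop := tflip t = t.

Definition directed {D : Type} (le : D -> D -> Prop) : Prop :=
  inhabited D /\ (forall d, le d d) /\
  (forall d1 d2 d3, le d1 d2 -> le d2 d3 -> le d1 d3) /\
  (forall d1 d2, exists d3, le d1 d3 /\ le d2 d3).

Definition MN_symmetrically_pseudo_amenable : Prop :=
  exists (D : Type) (le : D -> D -> Prop) (t : D -> Tens),
    directed le /\
    (forall d, in_Tens (t d)) /\
    (forall d, symmetric (t d)) /\
    (forall a, in_MN a -> forall eps, 0 < eps -> exists d0, forall d, le d0 d ->
       tnorm_le (fun i j k l => (lact a (t d) i j k l - ract (t d) a i j k l)%C) eps) /\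
    (forall a, in_MN a -> forall eps, 0 < eps -> exists d0, forall d, le d0 d ->
       mnorm_le (fun i l => (mmul (tpi (t d)) a i l - a i l)%C) eps).

From Stdlib Require Import Reals Lra Lia Classical FunctionalExtensionality.
From Coquelicot Require Import Coquelicot.
Open Scope R_scope.

(* The approximate diagonal is the sequence t_n = (1/n) sum_{i,j<n} e_ij (x) e_ji.
   It is symmetric and pi(t_n) = P_n, the projection onto the first n
   coordinates.  Entrywise, (a t_n - t_n a)_ijkl = a_il (1_{l<n} - 1_{i<n}) (P_n)_jk / n
   and (P_n a - a)_il = - 1_{i>=n} a_il, so both are controlled by the part of a
   outside the n x n corner, whose l^1 norm tends to 0 because ||a|| < oo.
   The net is unbounded (||t_n|| = n), which pseudo-amenability permits. *)

Lemma rsum_ext n f g : (forall i, (i < n)%nat -> f i = g i) -> rsum n f = rsum n g.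
Proof.
  induction n as [|n IH]; intros H; [reflexivity|]. cbn [rsum].
  rewrite IH by (intros; apply H; lia). now rewrite H by lia.
Qed.

Lemma rsum_le n f g : (forall i, (i < n)%nat -> f i <= g i) -> rsum n f <= rsum n g.
Proof.
  induction n as [|n IH]; intros H; cbn [rsum]; [lra|].
  apply Rplus_le_compat; [apply IH; intros; apply H; lia | apply H; lia].
Qed.

Lemma rsum_zero n f : (forall i, (i < n)%nat -> f i = 0) -> rsum n f = 0.
Proof.
  intros H. rewrite (rsum_ext n f (fun _ => 0)) by exact H. clear H.
  induction n as [|n IH]; cbn [rsum]; [reflexivity|]. rewrite IH. lra.
Qed.

Lemma rsum_nonneg n f : (forall i, (i < n)%nat -> 0 <= f i) -> 0 <= rsum n f.
Proof. intros H. rewrite <- (rsum_zero n (fun _ => 0)) by reflexivity. now apply rsum_le. Qed.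

Lemma rsum_le_extend m n f : (m <= n)%nat -> (forall i, 0 <= f i) -> rsum m f <= rsum n f.
Proof.
  induction 1 as [|n _ IH]; intros Hf; cbn [rsum]; [lra|].
  specialize (IH Hf). specialize (Hf n). lra.
Qed.

Lemma rsum_minus n f g : rsum n (fun i => f i - g i) = rsum n f - rsum n g.
Proof. induction n as [|n IH]; cbn [rsum]; [lra|]. rewrite IH. lra. Qed.

Lemma rsum_mult_l n c f : rsum n (fun i => c * f i) = c * rsum n f.
Proof. induction n as [|n IH]; cbn [rsum]; [lra|]. rewrite IH. lra. Qed.

Lemma rsum_mult_r n f c : rsum n f * c = rsum n (fun i => f i * c).
Proof. induction n as [|n IH]; cbn [rsum]; [lra|]. rewrite <- IH. lra. Qed.

Lemma rsum_const n c : rsum n (fun _ => c) = INR n * c.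
Proof. induction n as [|n IH]; cbn [rsum]; [simpl; lra|]. rewrite IH, S_INR. lra. Qed.

Lemma rsum_restrict n N f :
  rsum N (fun i => if (i <? n)%nat then f i else 0) = rsum (Nat.min N n) f.
Proof.
  induction N as [|N IH]; [reflexivity|]. cbn [rsum].
  destruct (Nat.ltb_spec N n).
  - rewrite Nat.min_l in * by lia. cbn [rsum]. now rewrite IH.
  - rewrite Nat.min_r in * by lia. rewrite IH. lra.
Qed.

Lemma rsum_eventually_zero K N f :
  (forall m, (K <= m)%nat -> f m = 0) -> (K <= N)%nat -> rsum N f = rsum K f.
Proof.
  intros Hf. induction 1 as [|N HKN IH]; [reflexivity|]. cbn [rsum].
  rewrite IH, (Hf N HKN). lra.
Qed.

Lemma rsum_single n p f : (p < n)%nat -> (forall i, i <> p -> f i = 0) -> rsum n f = f p.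
Proof.
  intros Hp Hf. rewrite (rsum_eventually_zero (S p) n f); [| intros m Hm; apply Hf; lia | exact Hp].
  cbn [rsum]. rewrite rsum_zero by (intros; apply Hf; lia). lra.
Qed.

Lemma sum_n_rsum f m : sum_n f m = rsum (S m) f.
Proof. rewrite sum_n_Reals. induction m as [|m IH]; simpl; [lra|]. rewrite IH. simpl. lra. Qed.

Lemma Series_finite_support f K : (forall m, (K <= m)%nat -> f m = 0) -> Series f = rsum K f.
Proof.
  intros Hf. apply is_series_unique.
  change (is_lim_seq (sum_n f) (rsum K f)).
  apply is_lim_seq_ext_loc with (fun _ => rsum K f); [|apply is_lim_seq_const].
  exists K. intros m Hm. rewrite sum_n_rsum. symmetry. apply rsum_eventually_zero; [exact Hf | lia].
Qed.

Lemma CSeries_single (f : nat -> C) p : (forall m, m <> p -> f m = 0%C) -> CSeries f = f p.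
Proof.
  intros Hf. unfold CSeries.
  rewrite (Series_finite_support _ (S p)), (Series_finite_support (fun m => Im (f m)) (S p))
    by (intros m Hm; rewrite Hf by lia; reflexivity).
  rewrite (rsum_single (S p) p (fun m => Re (f m))), (rsum_single (S p) p (fun m => Im (f m)))
    by (lia || (intros m Hm; rewrite Hf by exact Hm; reflexivity)).
  destruct (f p); reflexivity.
Qed.

Lemma CSeries_RtoC (f : nat -> R) : CSeries (fun m => RtoC (f m)) = RtoC (Series f).
Proof. unfold CSeries, RtoC; simpl. f_equal. now rewrite (Series_finite_support _ 0). Qed.

Definition mpartial (a : Mat) (N : nat) : R :=
  rsum N (fun i => rsum N (fun l => Cmod (a i l))).

Lemma mpartial_nonneg a N : 0 <= mpartial a N.
Proof. apply rsum_nonneg; intros; apply rsum_nonneg; intros; apply Cmod_ge_0. Qed.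

Lemma mpartial_mono a m N : (m <= N)%nat -> mpartial a m <= mpartial a N.
Proof.
  intros HmN. unfold mpartial.
  apply Rle_trans with (rsum m (fun i => rsum N (fun l => Cmod (a i l)))).
  - apply rsum_le; intros; apply rsum_le_extend; [exact HmN | intros; apply Cmod_ge_0].
  - apply rsum_le_extend; [exact HmN | intros; apply rsum_nonneg; intros; apply Cmod_ge_0].
Qed.

Lemma mpartial_sup a : in_MN a ->
  exists L, (forall N, mpartial a N <= L) /\
            (forall eps, 0 < eps -> exists N, L - eps < mpartial a N).
Proof.
  intros [M HM].
  destruct (completeness (fun x => exists N, x = mpartial a N)) as [L [HLub HLleast]].
  - exists M. intros x [N ->]. exact (HM N).
  - exists (mpartial a 0). eauto.
  - exists L. split; [intros N; apply HLub; eauto|].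
    intros eps Heps. apply NNPP. intros Hno.
    assert (L <= L - eps); [|lra].
    apply HLleast. intros x [N ->]. apply Rnot_lt_le. intros Hlt. apply Hno. eauto.
Qed.

Lemma mnorm_le_dominated (a b : Mat) e :
  (forall i l, Cmod (b i l) <= Cmod (a i l)) -> mnorm_le a e -> mnorm_le b e.
Proof.
  intros Hba Ha N. eapply Rle_trans; [|apply (Ha N)].
  apply rsum_le; intros; apply rsum_le; intros; apply Hba.
Qed.

Lemma tnorm_le_product (t : Tens) (b c : Mat) e1 e2 :
  (forall i j k l, Cmod (t i j k l) <= Cmod (b i l) * Cmod (c j k)) ->
  mnorm_le b e1 -> mnorm_le c e2 -> tnorm_le t (e1 * e2).
Proof.
  intros Ht Hb Hc N.
  apply Rle_trans with (mpartial b N * mpartial c N).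
  - unfold mpartial at 1. rewrite rsum_mult_r. apply rsum_le; intros i _.
    rewrite Rmult_comm. unfold mpartial. rewrite rsum_mult_r. apply rsum_le; intros j _.
    rewrite rsum_mult_r. apply rsum_le; intros k _.
    rewrite Rmult_comm, rsum_mult_r. apply rsum_le; intros l _. apply Ht.
  - apply Rmult_le_compat; [apply mpartial_nonneg | apply mpartial_nonneg | apply Hb | apply Hc].
Qed.

Definition corner_compl (n : nat) (a : Mat) : Mat :=
  fun i l => if andb (i <? n)%nat (l <? n)%nat then 0%C else a i l.

Lemma mpartial_corner_compl a n N :
  mpartial (corner_compl n a) N = mpartial a N - mpartial a (Nat.min N n).
Proof.
  unfold mpartial.
  transitivity (rsum N (fun i => rsum N (fun l => Cmod (a i l)) -
    rsum N (fun l => if (i <? n)%nat then if (l <? n)%nat then Cmod (a i l) else 0 else 0))).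
  { apply rsum_ext; intros i _. rewrite <- rsum_minus. apply rsum_ext; intros l _.
    unfold corner_compl. destruct (i <? n)%nat, (l <? n)%nat; simpl; rewrite ?Cmod_0; lra. }
  rewrite rsum_minus. f_equal.
  transitivity (rsum N (fun i =>
    if (i <? n)%nat then rsum N (fun l => if (l <? n)%nat then Cmod (a i l) else 0) else 0)).
  { apply rsum_ext; intros i _. destruct (i <? n)%nat; [reflexivity|]. now apply rsum_zero. }
  rewrite rsum_restrict. apply rsum_ext; intros i _. apply rsum_restrict.
Qed.

Lemma corner_compl_vanishes a : in_MN a -> forall eps, 0 < eps ->
  exists n0, forall n, (n0 <= n)%nat -> mnorm_le (corner_compl n a) eps.
Proof.
  intros Ha eps Heps. destruct (mpartial_sup a Ha) as [L [HL Happrox]].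
  destruct (Happrox eps Heps) as [n0 Hn0]. exists n0. intros n Hn N.
  change (mpartial (corner_compl n a) N <= eps). rewrite mpartial_corner_compl.
  destruct (Nat.le_ge_cases N n).
  - rewrite Nat.min_l by assumption. lra.
  - rewrite Nat.min_r by assumption.
    pose proof (HL N). pose proof (mpartial_mono a n0 n Hn). lra.
Qed.

Definition ind (n i : nat) : R := if (i <? n)%nat then 1 else 0.

Definition proj (n i l : nat) : R := if (i =? l)%nat then ind n i else 0.

Lemma ind_nonneg n i : 0 <= ind n i.
Proof. unfold ind. destruct (i <? n)%nat; lra. Qed.

Lemma rsum_ind N n : rsum N (ind n) = INR (Nat.min N n).
Proof. unfold ind. rewrite (rsum_restrict n N (fun _ => 1)), rsum_const. ring. Qed.

Lemma proj_diag n i : proj n i i = ind n i.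
Proof. unfold proj. now rewrite Nat.eqb_refl. Qed.

Lemma proj_offdiag n i l : i <> l -> proj n i l = 0.
Proof. intros H. unfold proj. now rewrite (proj2 (Nat.eqb_neq i l) H). Qed.

Lemma proj_sym n i l : proj n i l = proj n l i.
Proof. destruct (Nat.eq_dec i l) as [->|H]; [reflexivity|]. rewrite !proj_offdiag; auto. Qed.

Lemma mnorm_le_proj n r : 0 <= r -> mnorm_le (fun i l => RtoC (r * proj n i l)) (r * INR n).
Proof.
  intros Hr N. change (mpartial (fun i l => RtoC (r * proj n i l)) N <= r * INR n).
  unfold mpartial. rewrite (rsum_ext N _ (fun i => r * ind n i)).
  - rewrite rsum_mult_l, rsum_ind. apply Rmult_le_compat_l; [exact Hr|]. apply le_INR; lia.
  - intros i Hi. rewrite (rsum_single N i); [| exact Hi |].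
    + rewrite Cmod_R, proj_diag. apply Rabs_pos_eq, Rmult_le_pos; [exact Hr | apply ind_nonneg].
    + intros l Hl. rewrite proj_offdiag by congruence. rewrite Rmult_0_r, Cmod_R. apply Rabs_R0.
Qed.

Lemma mmul_proj_l n (a : Mat) i l :
  mmul (fun i m => RtoC (proj n i m)) a i l = (RtoC (ind n i) * a i l)%C.
Proof.
  unfold mmul. rewrite (CSeries_single _ i).
  - now rewrite proj_diag.
  - intros m Hm. rewrite proj_offdiag by congruence. apply Cmult_0_l.
Qed.

Definition diag_tensor (n : nat) : Tens :=
  fun i j k l => RtoC (proj n i l * (/ INR n * proj n j k)).

Lemma symmetric_diag_tensor n : symmetric (diag_tensor n).
Proof.
  unfold symmetric, tflip, diag_tensor.
  apply functional_extensionality; intro i; apply functional_extensionality; intro j.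
  apply functional_extensionality; intro k; apply functional_extensionality; intro l.
  rewrite (proj_sym n k j), (proj_sym n l i). f_equal. ring.
Qed.

Lemma in_Tens_diag_tensor n : (0 < n)%nat -> in_Tens (diag_tensor n).
Proof.
  intros Hn. exists ((1 * INR n) * (/ INR n * INR n)).
  apply tnorm_le_product with (b := fun i l => RtoC (1 * proj n i l))
                              (c := fun j k => RtoC (/ INR n * proj n j k)).
  - intros i j k l. unfold diag_tensor. rewrite !Cmod_R, Rmult_1_l, Rabs_mult. apply Rle_refl.
  - apply mnorm_le_proj; lra.
  - apply mnorm_le_proj, Rlt_le, Rinv_0_lt_compat, lt_0_INR, Hn.
Qed.

Lemma lact_diag_tensor a n i j k l :
  lact a (diag_tensor n) i j k l = (a i l * RtoC (ind n l * (/ INR n * proj n j k)))%C.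
Proof.
  unfold lact, diag_tensor. rewrite (CSeries_single _ l).
  - now rewrite proj_diag.
  - intros m Hm. rewrite proj_offdiag, Rmult_0_l by exact Hm. apply Cmult_0_r.
Qed.

Lemma ract_diag_tensor a n i j k l :
  ract (diag_tensor n) a i j k l = (RtoC (ind n i * (/ INR n * proj n j k)) * a i l)%C.
Proof.
  unfold ract, diag_tensor. rewrite (CSeries_single _ i).
  - now rewrite proj_diag.
  - intros m Hm. rewrite proj_offdiag, Rmult_0_l by congruence. apply Cmult_0_l.
Qed.

Lemma tpi_diag_tensor n : (0 < n)%nat -> tpi (diag_tensor n) = fun i l => RtoC (proj n i l).
Proof.
  intros Hn. apply functional_extensionality; intro i; apply functional_extensionality; intro l.
  unfold tpi, diag_tensor. rewrite CSeries_RtoC. f_equal.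
  rewrite (Series_finite_support _ n).
  - rewrite (rsum_ext n _ (fun j => proj n i l * / INR n * ind n j))
      by (intros j _; rewrite proj_diag; ring).
    rewrite rsum_mult_l, rsum_ind, Nat.min_id. field. apply not_0_INR. lia.
  - intros m Hm. rewrite proj_diag. unfold ind. rewrite (proj2 (Nat.ltb_ge m n) Hm). ring.
Qed.

Lemma Cmod_commutator_diag_tensor a n i j k l :
  Cmod (lact a (diag_tensor n) i j k l - ract (diag_tensor n) a i j k l)%C
  <= Cmod (corner_compl n a i l) * Cmod (RtoC (/ INR n * proj n j k)).
Proof.
  rewrite lact_diag_tensor, ract_diag_tensor.
  replace (_ - _)%C with (RtoC (ind n l - ind n i) * a i l * RtoC (/ INR n * proj n j k))%C
    by (rewrite !RtoC_mult, RtoC_minus; ring).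
  rewrite !Cmod_mult, Cmod_R. apply Rmult_le_compat_r; [apply Cmod_ge_0|].
  unfold corner_compl, ind. destruct (i <? n)%nat, (l <? n)%nat; simpl;
    rewrite ?Rminus_diag, ?Rminus_0_l, ?Rminus_0_r, ?Rabs_Ropp, ?Rabs_R0, ?Rabs_R1, ?Cmod_0;
    pose proof (Cmod_ge_0 (a i l)); lra.
Qed.

Lemma diag_tensor_commutator_le a n e : (0 < n)%nat -> mnorm_le (corner_compl n a) e ->
  tnorm_le (fun i j k l =>
    (lact a (diag_tensor n) i j k l - ract (diag_tensor n) a i j k l)%C) e.
Proof.
  intros Hn Ha. replace e with (e * (/ INR n * INR n)) by (field; apply not_0_INR; lia).
  apply tnorm_le_product with (b := corner_compl n a)
                              (c := fun j k => RtoC (/ INR n * proj n j k)).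
  - apply Cmod_commutator_diag_tensor.
  - exact Ha.
  - apply mnorm_le_proj, Rlt_le, Rinv_0_lt_compat, lt_0_INR, Hn.
Qed.

Lemma diag_tensor_unit_le a n e : (0 < n)%nat -> mnorm_le (corner_compl n a) e ->
  mnorm_le (fun i l => (mmul (tpi (diag_tensor n)) a i l - a i l)%C) e.
Proof.
  intros Hn. apply mnorm_le_dominated. intros i l.
  rewrite tpi_diag_tensor, mmul_proj_l by exact Hn.
  replace (_ - _)%C with (RtoC (ind n i - 1) * a i l)%C by (rewrite RtoC_minus; ring).
  rewrite Cmod_mult, Cmod_R.
  unfold corner_compl, ind. destruct (i <? n)%nat, (l <? n)%nat; simpl;
    rewrite ?Rminus_diag, ?Rminus_0_l, ?Rabs_Ropp, ?Rabs_R0, ?Rabs_R1, ?Cmod_0;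
    pose proof (Cmod_ge_0 (a i l)); lra.
Qed.

Lemma directed_nat_le : directed le.
Proof.
  split; [exact (inhabits 0%nat)|]. split; [exact le_n|]. split; [exact Nat.le_trans|].
  intros d1 d2. exists (Nat.max d1 d2). split; [apply Nat.le_max_l | apply Nat.le_max_r].
Qed.

Theorem theorem4p1 : MN_symmetrically_pseudo_amenable.
Proof.
  exists nat, le, (fun d => diag_tensor (S d)).
  split; [exact directed_nat_le|].
  split; [intros d; apply in_Tens_diag_tensor; lia|].
  split; [intros d; apply symmetric_diag_tensor|].
  split; intros a Ha eps Heps;
    destruct (corner_compl_vanishes a Ha eps Heps) as [n0 Hn0]; exists n0; intros d Hd.
  - apply diag_tensor_commutator_le, Hn0; lia.
  - apply diag_tensor_unit_le, Hn0; lia.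
Qed.
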